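(* Let $G=(V,E,m,w)$ be a weighted graph admitting an intrinsic metric $\rho$ with finite balls and finite jump size $s=\sup_{x\sim y}\rho(x,y)$. Suppose $G$ has polynomial volume growth: there are $x_0\in V$ and constants $\alpha, C$ with $m(B_R(x_0))\le C(1+R)^{\alpha}$ for all $R>0$. Let $k>0$ and $u\in\widetilde{\mathcal{P}}_k(G)$. Then for any $q\in\mathbb{N}$ with $4q>2k+\alpha+2$, $D_t^q u\equiv 0$. In particular, there exist functions $p_i$ on $V$, $0\le i\le q-1$, such that $u(x,t)=\sum_{i=0}^{q-1}p_i(x)\binom{-t}{i}$ for all $x\in V$, $t\in\mathbb{Z}_-$.
   Context: A weighted graph $G=(V,E,m,w)$ consists of a locally finite, simple, undirected, connected graph $(V,E)$, a symmetric edge weight $w:E\to(0,\infty)$, and a vertex weight $m:V\to(0,\infty)$; $m(\Omega)=\sum_{x\in\Omega}m_x$. The Laplacian is $\Delta f(x)=\sum_{y\sim x}\frac{w_{xy}}{m_x}(f(y)-f(x))$. A (pseudo)metric $\rho$ on $V$ is intrinsic if $\sum_{y\sim x}w_{xy}\rho^2(x,y)\le m_x$ for all $x$; $B_R(x)=\{y:\rho(y,x)\le R\}$. $\mathbb{Z}_-=\mathbb{Z}\cap(-\infty,0]$; $D_t u(x,t)=u(x,t)-u(x,t-1)$ and $D_t^q$ is its $q$-fold composition. An ancient solution of the discrete-time heat equation is $u:V\times\mathbb{Z}_-\to\mathbb{R}$ with $D_tu=\Delta u$. $\widetilde{\mathcal{P}}_k(G)$ is the space of such solutions for which there are $x_0\in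 V$ and $C_u$ with $\sup_{B_R(x_0)\times([-R^2,0]\cap\mathbb{Z})}|u|\le C_u(1+R)^k$ for all $R>0$. For $n\in\mathbb{Z}_{\ge0}$, $\binom{n}{i}=\frac{n(n-1)\cdots(n-i+1)}{i!}$ if $0\le i\le n$ and $0$ otherwise. *)

From HB Require Import structures.
From mathcomp Require Import all_boot all_order all_algebra.
From mathcomp Require Import reals exp.
Set Implicit Arguments. Unset Strict Implicit. Unset Printing Implicit Defensive.
Import Order.TTheory GRing.Theory Num.Theory.
Local Open Scope ring_scope.

(* A locally finite graph on the vertex type V is given by the neighbour
   lists nb : V -> seq V ; y ~ x  iff  y \in nb x. *)

Inductive reach (V : eqType) (nb : V -> seq V) : V -> V -> Prop :=
| reach_refl x : reach nb x x
| reach_step x y z : y \in nb x -> reach nb y z -> reach nb x z.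

Definition weighted_graph (R : realType) (V : eqType) (nb : V -> seq V)
    (w : V -> V -> R) (m : V -> R) : Prop :=
  [/\ (forall x, uniq (nb x)),
      (forall x, x \notin nb x),
      (forall x y, (y \in nb x) = (x \in nb y)),
      (forall x y, y \in nb x -> w x y = w y x /\ 0 < w x y) &
      ((forall x, 0 < m x) /\ (forall x y, reach nb x y))].

Definition laplacian (R : realType) (V : eqType) (nb : V -> seq V)
    (w : V -> V -> R) (m : V -> R) (f : V -> R) (x : V) : R :=
  \sum_(y <- nb x) (w x y / m x) * (f y - f x).

Definition pseudometric (R : realType) (V : Type) (rho : V -> V -> R) : Prop :=
  [/\ (forall x, rho x x = 0),
      (forall x y, 0 <= rho x y),
      (forall x y, rho x y = rho y x) &
      (forall x y z, rho x z <= rho x y + rho y z)].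

Definition intrinsic (R : realType) (V : eqType) (nb : V -> seq V)
    (w : V -> V -> R) (m : V -> R) (rho : V -> V -> R) : Prop :=
  pseudometric rho /\
  forall x, \sum_(y <- nb x) w x y * rho x y ^+ 2 <= m x.

Definition finite_balls (R : realType) (V : eqType) (rho : V -> V -> R) : Prop :=
  forall (x : V) (r : R), exists s : seq V,
    forall y, (y \in s) <-> rho y x <= r.

Definition finite_jump (R : realType) (V : eqType) (nb : V -> seq V)
    (rho : V -> V -> R) : Prop :=
  exists s : R, forall x y, y \in nb x -> rho x y <= s.

(* m(B_r(x0)) <= C (1+r)^alpha for all r > 0; m of a (finite) ball is the sum
   of m over its vertices, i.e. the sup of the sums over its finite
   duplicate-free subfamilies. *)
Definition poly_volume_growth (R : realType) (V : eqType) (m : V -> R)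
    (rho : V -> V -> R) (x0 : V) (alpha C : R) : Prop :=
  forall r : R, 0 < r ->
    forall s : seq V, uniq s -> (forall y, y \in s -> rho y x0 <= r) ->
      \sum_(y <- s) m y <= C * powR (1 + r) alpha.

Definition Dt (R : realType) (V : Type) (u : V -> int -> R) : V -> int -> R :=
  fun x t => u x t - u x (t - 1)%R.

Definition Dtq (R : realType) (V : Type) (q : nat) (u : V -> int -> R) :
  V -> int -> R := iter q (@Dt R V) u.

(* ancient solution: D_t u = Delta u on V x Z_- (values at t > 0 are
   irrelevant and unconstrained) *)
Definition ancient_solution (R : realType) (V : eqType) (nb : V -> seq V)
    (w : V -> V -> R) (m : V -> R) (u : V -> int -> R) : Prop :=
  forall x (t : int), t <= 0 ->
    Dt u x t = laplacian nb w m (fun y => u y t) x.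

Definition Ptilde (R : realType) (V : eqType) (nb : V -> seq V)
    (w : V -> V -> R) (m : V -> R) (rho : V -> V -> R) (k : R)
    (u : V -> int -> R) : Prop :=
  ancient_solution nb w m u /\
  exists (x0 : V) (Cu : R), forall r : R, 0 < r ->
    forall (y : V) (t : int), rho y x0 <= r -> - (r ^+ 2) <= t%:~R -> t <= 0 ->
      `|u y t| <= Cu * powR (1 + r) k.

(* The proof is a discrete parabolic Caccioppoli argument.  For an ancient
   solution g let E(g, r) be the L^2(m)-mass of g on the cylinder
   B_r(p) x (-r^2, 0].  Testing the heat equation against Lipschitz cutoffs
   adapted to the intrinsic metric gives, once r exceeds the jump size,
       r^4 E(D_t g, r) <= E(g, 7r):
   the Caccioppoli inequality bounds the space-time energy of g by its mass,
   and a second energy identity bounds the mass of D_t g by the energy.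
   Since each D_t^j u is again an ancient solution, q iterations together
   with the growth of u and of the volume give
   E(D_t^q u, r) <= L r^(2k + alpha + 2 - 4q), which tends to 0; hence
   D_t^q u = 0, and Newton's forward-difference formula in t expresses u
   through the binomials C(-t, i), i < q. *)

From HB Require Import structures.
From mathcomp Require Import all_boot all_order all_algebra.
From mathcomp Require Import boolp reals exp.
From mathcomp.algebra_tactics Require Import ring lra.
From mathcomp Require Import zify.
Import Order.TTheory GRing.Theory Num.Theory.
Local Open Scope ring_scope.

Set Implicit Arguments. Unset Strict Implicit.

Section SeqSums.
Variables (R : realFieldType) (V : eqType).

Lemma uniq_sub_ler_sum (s1 s2 : seq V) (F : V -> R) :
  uniq s1 -> uniq s2 -> {subset s1 <= s2} -> {in s2, forall y, 0 <= F y} ->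
  \sum_(y <- s1) F y <= \sum_(y <- s2) F y.
Proof.
move=> u1 u2 s12 F0; rewrite [leRHS](bigID (mem s1)) /=.
have -> : \sum_(y <- s2 | y \in s1) F y = \sum_(y <- s1) F y.
  rewrite -big_filter; apply/perm_big/uniq_perm; rewrite ?filter_uniq // => y.
  by rewrite mem_filter andb_idr //; apply: s12.
by rewrite lerDl big_seq_cond sumr_ge0 // => y /andP[/F0].
Qed.

Lemma big_mem_sub (s l : seq V) (F : V -> R) :
  uniq s -> uniq l -> {subset l <= s} ->
  \sum_(y <- s | y \in l) F y = \sum_(y <- l) F y.
Proof.
move=> us ul sub; rewrite -big_filter; apply/perm_big/uniq_perm.
- exact: filter_uniq.
- exact: ul.
- by move=> y; rewrite mem_filter andb_idr //; apply: sub.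
Qed.

Lemma ler_sum_mem (s l : seq V) (F : V -> R) :
  uniq s -> uniq l -> {in l, forall y, 0 <= F y} ->
  \sum_(y <- s | y \in l) F y <= \sum_(y <- l) F y.
Proof.
move=> us ul F0; rewrite -big_filter uniq_sub_ler_sum ?filter_uniq //.
by move=> y; rewrite mem_filter => /andP[].
Qed.

Lemma ler_sum_ord_prefix (F : nat -> R) (T N : nat) :
  (forall n, 0 <= F n) -> (T <= N)%N -> \sum_(n < T) F n <= \sum_(n < N) F n.
Proof.
move=> F0 TN; rewrite -!(big_mkord xpredT) (big_cat_nat (leq0n T) TN) /=.
by rewrite lerDl sumr_ge0.
Qed.

Lemma ler_sum_telescope (K M E : nat -> R) :
  (forall n, K n <= M n.+1 - M n + E n) ->
  forall N, \sum_(n < N) K n <= M N - M 0%N + \sum_(n < N) E n.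
Proof.
move=> KME; elim=> [|N IH]; first by rewrite !big_ord0; lra.
by rewrite !big_ord_recr /=; have := KME N; lra.
Qed.

(* Telescope up to each time N in [T, 2T) and average over these N. *)
Lemma ler_sum_telescope_average (K M E : nat -> R) (T : nat) :
  (0 < T)%N -> (forall n, 0 <= K n) -> (forall n, 0 <= M n) ->
  (forall n, 0 <= E n) -> (forall n, K n <= M n.+1 - M n + E n) ->
  \sum_(n < T) K n <= T%:R^-1 * \sum_(n < T + T) M n + \sum_(n < T + T) E n.
Proof.
move=> T0 K0 M0 E0 KME.
have L_le (i : 'I_T) :
    \sum_(n < T) K n <= M (T + i)%N + \sum_(n < T + T) E n.
  have TN : (T <= T + i)%N by rewrite leq_addr.
  have Nc : (T + i <= T + T)%N by rewrite leq_add2l ltnW.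
  have := ler_sum_ord_prefix K0 TN; have := ler_sum_ord_prefix E0 Nc.
  have := ler_sum_telescope KME (T + i); have := M0 0%N; lra.
set L := \sum_(n < T) K n in L_le *; set c := \sum_(n < T + T) E n in L_le *.
have avg : T%:R * L <= \sum_(n < T + T) M n + T%:R * c.
  have sumT (a : R) : T%:R * a = \sum_(i < T) a by rewrite sumr_const card_ord mulr_natl.
  have : \sum_(i < T) L <= \sum_(i < T) (M (T + i)%N + c).
    by apply: ler_sum => i _; apply: L_le.
  rewrite big_split /= -!sumT big_split_ord /=.
  have : 0 <= \sum_(i < T) M i by exact: sumr_ge0.
  lra.
have Tp : 0 < T%:R :> R by rewrite ltr0n.
by rewrite -(ler_pM2l Tp) mulrDr mulrA mulfV ?gt_eqF // mul1r.
Qed.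

End SeqSums.

Lemma powR_affine_le (R : realType) (a K d r : R) : 1 <= K -> 0 <= d -> 1 <= r ->
  powR (1 + (K * r + d)) a <= (powR (K + 1 + d) a + 1) * powR r a.
Proof.
move=> K1 d0 r1; have Kr0 : 0 <= K * r by rewrite mulr_ge0 //; lra.
have [a0|a0] := lerP 0 a.
  have le_r : 1 + (K * r + d) <= (K + 1 + d) * r.
    have : d <= d * r by rewrite ler_peMr.
    lra.
  have Kdr0 : 0 <= (K + 1 + d) * r by rewrite mulr_ge0; lra.
  apply: le_trans (_ : _ <= ((K + 1 + d) * r) `^ a) _.
    by apply: ge0_ler_powR; rewrite ?nnegrE //; lra.
  by rewrite powRM ?mulrDl ?mul1r ?lerDl ?powR_ge0 //; lra.
have r_le : r <= 1 + (K * r + d).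
  have : r <= K * r by rewrite ler_peMl //; lra.
  lra.
rewrite -[a]opprK !(powRN _ (- a)) mulrDl mul1r ler_wpDl ?mulr_ge0 ?invr_ge0 ?powR_ge0 //.
rewrite lef_pV2 ?posrE ?powR_gt0 //; try lra.
by rewrite ge0_ler_powR ?nnegrE //; lra.
Qed.

Lemma powR_bounded_le0 (R : realType) (c L d : R) (N : nat) : 0 < d ->
  (forall r : nat, (N <= r)%N -> c * powR r%:R d <= L) -> c <= 0.
Proof.
move=> d0 cL; rewrite leNgt; apply/negP => c0.
set b := powR (`|L| / c + 1) d^-1.
have b_le : b <= (N + Num.bound b)%:R.
  have := archi_boundP (powR_ge0 (`|L| / c + 1) d^-1); rewrite natrD -/b.
  by have := ler0n R N; lra.
have Lc0 : 0 <= `|L| / c + 1 by rewrite addr_ge0 ?divr_ge0 // ltW.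
have Lc_le : `|L| / c + 1 <= powR (N + Num.bound b)%:R d.
  have -> : `|L| / c + 1 = powR b d by rewrite /b -powRrM mulVf ?powRr1 ?lt0r_neq0.
  by apply: ge0_ler_powR; rewrite ?nnegrE ?powR_ge0 // ltW.
have := ler_wpM2l (ltW c0) Lc_le; rewrite mulrDr mulr1 mulrCA mulfV ?gt_eqF // mulr1.
by have := cL (N + Num.bound b)%N (leq_addr _ _); have := ler_norm L; lra.
Qed.

Lemma Dt_opp_nat (R : realType) (V : Type) (g : V -> int -> R) x (n : nat) :
  Dt g x (- n%:Z) = g x (- n%:Z) - g x (- n.+1%:Z).
Proof. by rewrite /Dt -addn1 PoszD opprD. Qed.

Lemma Dtq_eq0 (R : realType) (V : Type) (g : V -> int -> R) l :
  (forall y (t : int), t <= 0 -> g y t = 0) ->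
  forall y (t : int), t <= 0 -> Dtq l g y t = 0.
Proof.
move=> g0; elim: l => [|l IH] y t t0 //=; first exact: g0.
by rewrite /Dt -/(Dtq l g) !IH ?subr0 //; lra.
Qed.

Lemma newton_forward_difference (R : comNzRingType) (F : nat -> nat -> R) :
  (forall i n, F i.+1 n = F i n - F i n.+1) ->
  forall n i N, (n < N)%N ->
  F i n = \sum_(j < N) ('C(n, j))%:R * (-1) ^+ j * F (i + j)%N 0%N.
Proof.
move=> FS; elim=> [|n IH] i [|N] // nN.
  rewrite big_ord_recl /= bin0 expr0 addn0 mulr1 mul1r big1 ?addr0 // => j _.
  by rewrite /bump leq0n add1n bin0n /= !mul0r.
have -> : F i n.+1 = F i n - F i.+1 n by rewrite FS; ring.
rewrite (IH i N.+1 (ltnW nN)) (IH i.+1 N nN).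
rewrite big_ord_recl [in RHS]big_ord_recl !bin0 -addrA; congr (_ + _).
rewrite -sumrB; apply: eq_bigr => j _.
by rewrite lift0 binS natrD exprS addnS -addSn; ring.
Qed.

Lemma Dtq_eq0_expansion (R : realType) (V : Type) (u : V -> int -> R) (q : nat) :
  (forall x (t : int), t <= 0 -> Dtq q u x t = 0) ->
  exists p : nat -> V -> R, forall x (t : int), t <= 0 ->
    u x t = \sum_(i < q) p i x * ('C(`|t|%N, i))%:R.
Proof.
move=> uq0; exists (fun i x => (-1) ^+ i * Dtq i u x 0) => x t t0.
have tn : t = - `|t|%N%:Z by rewrite lez0_abs // opprK.
pose F i n := Dtq i u x (- n%:Z).
have FS i n : F i.+1 n = F i n - F i n.+1 by rewrite /F /= Dt_opp_nat.
have nN : (`|t| < q + `|t|.+1)%N by rewrite addnS ltnS leq_addl.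
have := newton_forward_difference FS 0 nN; rewrite /F /= -tn => ->.
rewrite big_split_ord /= [X in _ + X]big1 ?addr0 => [|j _].
  by apply: eq_bigr => i _; rewrite add0n oppr0; ring.
rewrite add0n oppr0 /Dtq addnC iterD -/(Dtq j (Dtq q u)) -/(Dtq q u).
by rewrite Dtq_eq0 ?mulr0.
Qed.

Section Caccioppoli.
Variables (R : realFieldType) (V : eqType) (Vs : seq V).
Variables (W : V -> V -> R) (m phi : V -> R) (a : R).
Hypothesis W_sym : forall x y, W x y = W y x.
Hypothesis W_ge0 : forall x y, 0 <= W x y.
Hypothesis m_ge0 : forall x, 0 <= m x.
Hypothesis phi_ge0 : forall x, 0 <= phi x.
Hypothesis phi_le1 : forall x, phi x <= 1.
Hypothesis a_gt0 : 0 < a.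
Hypothesis phi_intrinsic :
  forall x, a ^+ 2 * \sum_(y <- Vs) W x y * (phi x - phi y) ^+ 2 <= m x.
(* [g n] is the solution at time [-n]; [Vs] lists the vertices carrying the
   support of [phi] together with all their neighbours. *)
Variable g : nat -> V -> R.
Hypothesis g_heat : forall n x, phi x != 0 ->
  m x * (g n x - g n.+1 x) = \sum_(y <- Vs) W x y * (g n y - g n x).

Definition mass (f : V -> R) := \sum_(x <- Vs) m x * f x ^+ 2.

Definition energy (f : V -> R) :=
  \sum_(x <- Vs) \sum_(y <- Vs) W x y * (f x - f y) ^+ 2.

Definition cutoff_gradient_mass (f : V -> R) :=
  \sum_(x <- Vs) \sum_(y <- Vs) W x y * (f x ^+ 2 * (phi x - phi y) ^+ 2).

Definition cutoff_energy (f : V -> R) :=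
  \sum_(x <- Vs) \sum_(y <- Vs) W x y * (phi x * phi y * (f x - f y) ^+ 2).

Definition support_energy (f : V -> R) :=
  \sum_(x <- Vs) \sum_(y <- Vs) (if phi x != 0 then W x y * (f x - f y) ^+ 2 else 0).

Lemma mass_ge0 f : 0 <= mass f.
Proof. by apply: sumr_ge0 => x _; exact: mulr_ge0 (m_ge0 x) (sqr_ge0 _). Qed.

Lemma energy_ge0 f : 0 <= energy f.
Proof. by do 2!apply: sumr_ge0 => ? _; exact: mulr_ge0 (W_ge0 _ _) (sqr_ge0 _). Qed.

Lemma cutoff_gradient_mass_ge0 f : 0 <= cutoff_gradient_mass f.
Proof.
by do 2!apply: sumr_ge0 => ? _; exact/mulr_ge0/mulr_ge0/sqr_ge0/sqr_ge0.
Qed.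

Lemma cutoff_energy_ge0 f : 0 <= cutoff_energy f.
Proof.
by do 2!apply: sumr_ge0 => ? _; exact/mulr_ge0/mulr_ge0/sqr_ge0/mulr_ge0.
Qed.

Lemma support_energy_ge0 f : 0 <= support_energy f.
Proof.
do 2!apply: sumr_ge0 => ? _.
by case: ifP => // _; exact: mulr_ge0 (W_ge0 _ _) (sqr_ge0 _).
Qed.

Lemma mass_cutoff_le f : mass (phi \* f) <= mass f.
Proof.
apply: ler_sum => x _ /=; rewrite ler_wpM2l // exprMn ler_piMl ?sqr_ge0 //.
by rewrite exprn_ile1.
Qed.

Lemma cutoff_energy_le_support f : cutoff_energy f <= support_energy f.
Proof.
apply: ler_sum => x _; apply: ler_sum => y _.
have [->|_] := eqVneq (phi x) 0; first by rewrite !mul0r mulr0.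
rewrite ler_wpM2l // ler_piMl ?sqr_ge0 // mulr_ile1 //.
Qed.

Lemma cutoff_gradient_mass_le f : cutoff_gradient_mass f <= a ^-2 * mass f.
Proof.
rewrite mulr_sumr; apply: ler_sum => x _.
have -> : \sum_(y <- Vs) W x y * (f x ^+ 2 * (phi x - phi y) ^+ 2)
    = f x ^+ 2 * \sum_(y <- Vs) W x y * (phi x - phi y) ^+ 2.
  by rewrite mulr_sumr; apply: eq_bigr => y _; ring.
have -> : a ^-2 * (m x * f x ^+ 2) = f x ^+ 2 * (a ^-2 * m x) by ring.
by rewrite ler_wpM2l ?sqr_ge0 // ler_pdivlMl ?exprn_gt0.
Qed.

Lemma sum_W_sym (F : V -> V -> R) :
  \sum_(x <- Vs) \sum_(y <- Vs) W x y * F x y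
  = \sum_(x <- Vs) \sum_(y <- Vs) W x y * F y x.
Proof.
by rewrite exchange_big; apply: eq_bigr => x _; apply: eq_bigr => y _; rewrite W_sym.
Qed.

Lemma sum_W_green (psi f : V -> R) :
  2 * \sum_(x <- Vs) \sum_(y <- Vs) W x y * (psi x * (f y - f x))
  = - \sum_(x <- Vs) \sum_(y <- Vs) W x y * ((psi x - psi y) * (f x - f y)).
Proof.
rewrite mulr2n mulrDl mul1r {2}sum_W_sym -sumrN -big_split /=.
apply: eq_bigr => x _; rewrite -sumrN -big_split /=.
by apply: eq_bigr => y _; ring.
Qed.

Lemma heat_test n (F : V -> R) :
  \sum_(x <- Vs) m x * phi x ^+ 2 * F x * (g n x - g n.+1 x)
  = \sum_(x <- Vs) \sum_(y <- Vs) W x y * (phi x ^+ 2 * F x * (g n y - g n x)).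
Proof.
apply: eq_bigr => x _; have [->|phix] := eqVneq (phi x) 0.
  by rewrite big1 => [|y _]; ring.
transitivity (phi x ^+ 2 * F x * (m x * (g n x - g n.+1 x))); first by ring.
rewrite g_heat // mulr_sumr.
by apply: eq_bigr => y _; ring.
Qed.

Lemma sum_W_cross_le f :
  \sum_(x <- Vs) \sum_(y <- Vs) W x y * (f x * f y * (phi x - phi y) ^+ 2)
  <= cutoff_gradient_mass f.
Proof.
suff : 2 * \sum_(x <- Vs) \sum_(y <- Vs) W x y * (f x * f y * (phi x - phi y) ^+ 2)
       <= cutoff_gradient_mass f + cutoff_gradient_mass f by lra.
rewrite {2}/cutoff_gradient_mass [in X in _ <= _ + X]sum_W_sym mulr_sumr -big_split /=.
apply: ler_sum => x _; rewrite mulr_sumr -big_split /=; apply: ler_sum => y _.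
rewrite -subr_ge0; set d := (X in 0 <= X).
have -> : d = W x y * ((f x - f y) * (phi x - phi y)) ^+ 2 by rewrite /d; ring.
exact: mulr_ge0 (W_ge0 x y) (sqr_ge0 _).
Qed.

Lemma caccioppoli_step n :
  energy (phi \* g n)
  <= mass (phi \* g n.+1) - mass (phi \* g n) + cutoff_gradient_mass (g n).
Proof.
have convex : mass (phi \* g n) - mass (phi \* g n.+1)
    <= 2 * \sum_(x <- Vs) m x * phi x ^+ 2 * g n x * (g n x - g n.+1 x).
  rewrite /mass -sumrB mulr_sumr; apply: ler_sum => x _ /=.
  rewrite -subr_ge0; set d := (X in 0 <= X).
  have -> : d = m x * (phi x * (g n x - g n.+1 x)) ^+ 2 by rewrite /d; ring.
  exact: mulr_ge0 (m_ge0 x) (sqr_ge0 _).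
have parts : 2 * \sum_(x <- Vs) m x * phi x ^+ 2 * g n x * (g n x - g n.+1 x)
    = - energy (phi \* g n) + \sum_(x <- Vs) \sum_(y <- Vs)
        W x y * (g n x * g n y * (phi x - phi y) ^+ 2).
  rewrite heat_test (sum_W_green (fun x => phi x ^+ 2 * g n x)) /energy.
  rewrite -!sumrN -big_split /=; apply: eq_bigr => x _.
  by rewrite -!sumrN -big_split /=; apply: eq_bigr => y _; ring.
have := sum_W_cross_le (g n); lra.
Qed.

(* Young's inequality [2 u v <= a^2 u^2 + v^2 / a^2], with the first term
   absorbed by the intrinsic bound on [phi]. *)
Lemma cross_term_le f k :
  2 * \sum_(x <- Vs) \sum_(y <- Vs) W x y * (phi x * (phi y - phi x) * (f x - f y) * k x)
  <= mass (phi \* k) + a ^-2 * support_energy f.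
Proof.
have young : 2 * \sum_(x <- Vs) \sum_(y <- Vs)
      W x y * (phi x * (phi y - phi x) * (f x - f y) * k x)
    <= \sum_(x <- Vs) \sum_(y <- Vs)
      (W x y * (a ^+ 2 * phi x ^+ 2 * k x ^+ 2 * (phi x - phi y) ^+ 2)
       + (if phi x != 0 then a ^-2 * (W x y * (f x - f y) ^+ 2) else 0)).
  rewrite mulr_sumr; apply: ler_sum => x _; rewrite mulr_sumr; apply: ler_sum => y _.
  have [->|phix] := eqVneq (phi x) 0; rewrite /= -subr_ge0; set d := (X in 0 <= X).
    by have -> : d = 0 by rewrite /d; ring.
  have -> : d = W x y * (a * phi x * (phi y - phi x) * k x - (f x - f y) / a) ^+ 2.
    by rewrite /d; field; rewrite gt_eqF.
  exact: mulr_ge0 (W_ge0 x y) (sqr_ge0 _).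
apply: (le_trans young); rewrite /support_energy mulr_sumr -big_split /=.
apply: ler_sum => x _; rewrite big_split /= mulr_sumr; apply: lerD.
  have -> : \sum_(y <- Vs) W x y * (a ^+ 2 * phi x ^+ 2 * k x ^+ 2 * (phi x - phi y) ^+ 2)
      = (phi x * k x) ^+ 2 * (a ^+ 2 * \sum_(y <- Vs) W x y * (phi x - phi y) ^+ 2).
    by rewrite !mulr_sumr; apply: eq_bigr => y _; ring.
  by rewrite mulrC ler_wpM2r ?sqr_ge0.
by apply: ler_sum => y _; case: ifP; rewrite ?mulr0.
Qed.

Lemma cutoff_energy_step n :
  2 * mass (phi \* (g n \- g n.+1))
  <= cutoff_energy (g n.+1) - cutoff_energy (g n) + 2 * a ^-2 * support_energy (g n).
Proof.
set Q := \sum_(x <- Vs) \sum_(y <- Vs)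
  W x y * (phi x * phi y * (g n x - g n y) * (g n x - g n.+1 x)).
have swap : Q = \sum_(x <- Vs) \sum_(y <- Vs)
    W x y * - (phi x * phi y * (g n x - g n y) * (g n y - g n.+1 y)).
  by rewrite /Q sum_W_sym; apply: eq_bigr => x _; apply: eq_bigr => y _; ring.
have convex : cutoff_energy (g n) - cutoff_energy (g n.+1) <= 2 * Q + 2 * Q.
  rewrite {2}swap /Q /cutoff_energy -sumrB !mulr_sumr -big_split /=.
  apply: ler_sum => x _; rewrite -sumrB !mulr_sumr -big_split /=; apply: ler_sum => y _.
  rewrite -subr_ge0; set d := (X in 0 <= X).
  have -> : d = W x y * (phi x * phi y *
      ((g n x - g n.+1 x) - (g n y - g n.+1 y)) ^+ 2) by rewrite /d; ring.
  exact/mulr_ge0/mulr_ge0/sqr_ge0/mulr_ge0.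
have parts : Q = - mass (phi \* (g n \- g n.+1)) + \sum_(x <- Vs) \sum_(y <- Vs)
    W x y * (phi x * (phi y - phi x) * (g n x - g n y) * (g n x - g n.+1 x)).
  have -> : mass (phi \* (g n \- g n.+1)) = \sum_(x <- Vs)
      m x * phi x ^+ 2 * (g n x - g n.+1 x) * (g n x - g n.+1 x).
    by apply: eq_bigr => x _ /=; ring.
  rewrite (heat_test n (g n \- g n.+1)) -sumrN -big_split /=.
  by apply: eq_bigr => x _; rewrite -sumrN -big_split /=; apply: eq_bigr => y _; ring.
have := cross_term_le (g n) (g n \- g n.+1); lra.
Qed.

Lemma sum_energy_le T : (0 < T)%N ->
  \sum_(n < T) energy (phi \* g n)
  <= (T%:R^-1 + a ^-2) * \sum_(n < T + T) mass (g n).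
Proof.
move=> T0.
apply: le_trans (ler_sum_telescope_average (K := fun n => energy (phi \* g n))
  (M := fun n => mass (phi \* g n)) (E := fun n => cutoff_gradient_mass (g n))
  T0 _ _ _ caccioppoli_step) _ => [n|n|n|].
- exact: energy_ge0.
- exact: mass_ge0.
- exact: cutoff_gradient_mass_ge0.
rewrite mulrDl [a ^-2 * _]mulr_sumr; apply: lerD; last first.
  by apply: ler_sum => n _; apply: cutoff_gradient_mass_le.
by rewrite ler_wpM2l ?invr_ge0 //; apply: ler_sum => n _; apply: mass_cutoff_le.
Qed.

Lemma sum_mass_Dt_le T : (0 < T)%N ->
  2 * \sum_(n < T) mass (phi \* (g n \- g n.+1))
  <= (T%:R^-1 + 2 * a ^-2) * \sum_(n < T + T) support_energy (g n).
Proof.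
move=> T0; rewrite mulr_sumr.
apply: le_trans (ler_sum_telescope_average
  (K := fun n => 2 * mass (phi \* (g n \- g n.+1)))
  (M := fun n => cutoff_energy (g n)) (E := fun n => 2 * a ^-2 * support_energy (g n))
  T0 _ _ _ cutoff_energy_step) _ => [n|n|n|].
- by rewrite mulr_ge0 ?mass_ge0.
- exact: cutoff_energy_ge0.
- by rewrite !mulr_ge0 ?support_energy_ge0 ?invr_ge0 ?exprn_ge0 // ltW.
rewrite -mulr_sumr [leRHS]mulrDl; apply: lerD => //.
by rewrite ler_wpM2l ?invr_ge0 //; apply: ler_sum => n _; apply: cutoff_energy_le_support.
Qed.

End Caccioppoli.

Section Cutoff.
Variables (R : realFieldType) (V : Type) (rho : V -> V -> R) (p : V).
Hypothesis rho_sym : forall x y, rho x y = rho y x.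
Hypothesis rho_tri : forall x y z, rho x z <= rho x y + rho y z.
Hypothesis rho_ge0 : forall x y, 0 <= rho x y.

Definition ramp (v : R) := if v <= 1 then 1 else if 2 <= v then 0 else 2 - v.

Lemma ramp_ge0 v : 0 <= ramp v.
Proof. by rewrite /ramp; case: (lerP v 1) => ?; case: (lerP 2 v) => ?; lra. Qed.

Lemma ramp_le1 v : ramp v <= 1.
Proof. by rewrite /ramp; case: (lerP v 1) => ?; case: (lerP 2 v) => ?; lra. Qed.

Lemma ramp_lipschitz v v' : `|ramp v - ramp v'| <= `|v - v'|.
Proof.
have := ler_norm (v - v'); have := ler_norm (v' - v); rewrite distrC.
rewrite ler_norml /ramp.
case: (lerP v 1) => ?; case: (lerP 2 v) => ?;
  by case: (lerP v' 1) => ?; case: (lerP 2 v') => ? /=; lra.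
Qed.

Definition cutoff (c : R) (x : V) := ramp (rho x p / c).

Lemma cutoff_ge0 c x : 0 <= cutoff c x. Proof. exact: ramp_ge0. Qed.

Lemma cutoff_le1 c x : cutoff c x <= 1. Proof. exact: ramp_le1. Qed.

Lemma cutoff_lipschitz c x y :
  0 < c -> c ^+ 2 * (cutoff c x - cutoff c y) ^+ 2 <= rho x y ^+ 2.
Proof.
move=> c0; rewrite -exprMn -real_normK ?num_real // lerXn2r ?nnegrE //.
have := ramp_lipschitz (rho x p / c) (rho y p / c).
rewrite -mulrBl normrM normfV (gtr0_norm c0) /cutoff => lip.
rewrite normrM (gtr0_norm c0) -ler_pdivlMl //; apply: le_trans lip _.
rewrite mulrC ler_pM2l ?invr_gt0 // ler_norml.
by have := rho_tri x y p; have := rho_tri y x p; rewrite (rho_sym y x); lra.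
Qed.

Lemma cutoff_eq1 c x : 0 < c -> rho x p <= c -> cutoff c x = 1.
Proof. by move=> c0 xc; rewrite /cutoff /ramp ler_pdivrMr // mul1r xc. Qed.

Lemma cutoff_neq0 c x : 0 < c -> cutoff c x != 0 -> rho x p < 2 * c.
Proof.
move=> c0; apply: contraR; rewrite -leNgt -ler_pdivlMr // => xc.
by rewrite /cutoff /ramp xc ifN //; rewrite -ltNge; lra.
Qed.

End Cutoff.

Section Graph.
Variables (R : realType) (V : eqType) (nb : V -> seq V) (w : V -> V -> R).
Variables (m : V -> R) (rho : V -> V -> R).
Hypothesis nb_uniq : forall x, uniq (nb x).
Hypothesis nb_sym : forall x y, (y \in nb x) = (x \in nb y).
Hypothesis w_sym_gt0 : forall x y, y \in nb x -> w x y = w y x /\ 0 < w x y.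
Hypothesis m_gt0 : forall x, 0 < m x.
Hypothesis rho_sym : forall x y, rho x y = rho y x.
Hypothesis rho_tri : forall x y z, rho x z <= rho x y + rho y z.
Hypothesis rho_ge0 : forall x y, 0 <= rho x y.
Hypothesis rho_intrinsic : forall x, \sum_(y <- nb x) w x y * rho x y ^+ 2 <= m x.
Variables (s : R) (p : V) (ball : R -> seq V).
Hypothesis jump_le : forall x y, y \in nb x -> rho x y <= s.
Hypothesis ball_uniq : forall r, uniq (ball r).
Hypothesis mem_ball : forall r y, (y \in ball r) = (rho y p <= r).

Definition wt x y := if y \in nb x then w x y else 0.

Lemma wt_sym x y : wt x y = wt y x.
Proof. by rewrite /wt -nb_sym; case: ifP => // /w_sym_gt0[]. Qed.

Lemma wt_ge0 x y : 0 <= wt x y.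
Proof. by rewrite /wt; case: ifP => // /w_sym_gt0[_ /ltW]. Qed.

Lemma m_ge0 x : 0 <= m x. Proof. exact: ltW. Qed.

Lemma cutoff_intrinsic c (Vs : seq V) x : 0 < c -> uniq Vs ->
  c ^+ 2 * \sum_(y <- Vs) wt x y * (cutoff rho p c x - cutoff rho p c y) ^+ 2 <= m x.
Proof.
move=> c0 uVs; apply: le_trans (rho_intrinsic x).
have -> : c ^+ 2 * \sum_(y <- Vs) wt x y * (cutoff rho p c x - cutoff rho p c y) ^+ 2
    = \sum_(y <- Vs | y \in nb x) w x y * (c * (cutoff rho p c x - cutoff rho p c y)) ^+ 2.
  rewrite mulr_sumr [RHS]big_mkcond; apply: eq_bigr => y _.
  by rewrite /wt; case: ifP => _; ring.
apply: le_trans (ler_sum_mem _ _ _) _ => // [y /w_sym_gt0[_ /ltW w0]|].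
  exact: mulr_ge0 w0 (sqr_ge0 _).
rewrite big_seq [leRHS]big_seq; apply: ler_sum => y /w_sym_gt0[_ /ltW w0].
by rewrite ler_wpM2l // exprMn cutoff_lipschitz.
Qed.

Lemma laplacian_wt (f : V -> R) x (Vs : seq V) : uniq Vs -> {subset nb x <= Vs} ->
  m x * laplacian nb w m f x = \sum_(y <- Vs) wt x y * (f y - f x).
Proof.
move=> uVs sub; have mx0 : m x != 0 by rewrite gt_eqF.
have -> : \sum_(y <- Vs) wt x y * (f y - f x)
    = \sum_(y <- Vs | y \in nb x) w x y * (f y - f x).
  by rewrite [RHS]big_mkcond; apply: eq_bigr => y _; rewrite /wt; case: ifP => _; ring.
rewrite big_mem_sub // /laplacian mulr_sumr; apply: eq_bigr => y _.
by field.
Qed.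

Lemma nb_sub_ball x r : rho x p + s <= r -> {subset nb x <= ball r}.
Proof.
move=> xr y /jump_le xy; rewrite mem_ball.
by have := rho_tri y x p; rewrite (rho_sym y x); lra.
Qed.

Definition cyl_mass (f : V -> int -> R) (r : nat) :=
  \sum_(n < r ^ 2) mass (ball r%:R) m (fun x => f x (- n%:Z)).

Lemma cyl_mass_ge0 f r : 0 <= cyl_mass f r.
Proof. by apply: sumr_ge0 => n _; apply: (mass_ge0 _ m_ge0). Qed.

Lemma cyl_mass_ge_term f r x (n : nat) : rho x p <= r%:R -> (n < r ^ 2)%N ->
  m x * f x (- n%:Z) ^+ 2 <= cyl_mass f r.
Proof.
move=> xr nr; rewrite /cyl_mass (bigD1 (Ordinal nr)) //= ler_wpDr //.
  by apply: sumr_ge0 => i _; apply: (mass_ge0 _ m_ge0).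
rewrite /mass (big_rem x) ?mem_ball //= ler_wpDr //.
by apply: sumr_ge0 => y _; exact: mulr_ge0 (m_ge0 y) (sqr_ge0 _).
Qed.

Lemma ancient_Dt g : ancient_solution nb w m g -> ancient_solution nb w m (Dt g).
Proof.
move=> g_anc x t t0; have t1 : t - 1 <= 0 by lra.
rewrite {1}/Dt !g_anc // /laplacian -sumrB.
by apply: eq_bigr => y _; rewrite /Dt; ring.
Qed.

Lemma ancient_Dtq g j : ancient_solution nb w m g -> ancient_solution nb w m (Dtq j g).
Proof. by move=> g_anc; elim: j => [|j IH] //=; apply: ancient_Dt. Qed.

Section ReversePoincare.
Variables (g : V -> int -> R) (r : nat).
Hypothesis g_ancient : ancient_solution nb w m g.
Hypothesis r_gt0 : (0 < r)%N.
Hypothesis s_le_r : s <= r%:R.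

Let B := ball (7 * r)%:R.
Let gs n x := g x (- n%:Z).

Let r_pos : 0 < r%:R :> R. Proof. by rewrite ltr0n. Qed.

Lemma heat_in_ball n x : rho x p < 6 * r%:R ->
  m x * (gs n x - gs n.+1 x) = \sum_(y <- B) wt x y * (gs n y - gs n x).
Proof.
move=> x6; rewrite /gs -Dt_opp_nat g_ancient ?oppr_le0 //.
apply: laplacian_wt; first exact: ball_uniq.
by apply: nb_sub_ball; have := s_le_r; rewrite natrM; lra.
Qed.

Lemma cyl_mass_Dt_le_support :
  r%:R ^+ 2 * cyl_mass (Dt g) r
  <= 3 / 2 * \sum_(n < r ^ 2 + r ^ 2) support_energy B wt (cutoff rho p r%:R) (gs n).
Proof.
have T0 : (0 < r ^ 2)%N by rewrite expn_gt0 r_gt0.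
have r26 : 2 * r%:R <= 6 * r%:R :> R by have := r_pos; lra.
have := sum_mass_Dt_le (Vs := B) wt_sym wt_ge0 m_ge0 (cutoff_ge0 rho p r%:R)
  (cutoff_le1 rho p r%:R) r_pos (fun x => cutoff_intrinsic x r_pos (ball_uniq _))
  (fun n x phx => @heat_in_ball n x (lt_le_trans (cutoff_neq0 r_pos phx) r26)) T0.
have Dt_le : cyl_mass (Dt g) r
    <= \sum_(n < r ^ 2) mass B m (cutoff rho p r%:R \* (gs n \- gs n.+1)).
  apply: ler_sum => n _; rewrite /mass.
  have -> : \sum_(x <- ball r%:R) m x * Dt g x (- n%:Z) ^+ 2 = \sum_(x <- ball r%:R)
      m x * ((cutoff rho p r%:R \* (gs n \- gs n.+1)) x) ^+ 2.
    rewrite big_seq [RHS]big_seq; apply: eq_bigr => x; rewrite mem_ball => xr /=.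
    by rewrite cutoff_eq1 // Dt_opp_nat mul1r.
  apply: uniq_sub_ler_sum; rewrite ?ball_uniq //.
    by move=> x; rewrite !mem_ball natrM; have := r_pos; lra.
  by move=> x _; exact: mulr_ge0 (m_ge0 x) (sqr_ge0 _).
have t0 : 0 < r%:R ^+ 2 :> R by rewrite exprn_gt0.
move: Dt_le; set M := \sum_(n < r ^ 2) _; set X := \sum_(n < r ^ 2 + r ^ 2) _.
rewrite natrX => Dt_le HM; have {}HM : 2 * M * r%:R ^+ 2 <= 3 * X.
  rewrite -ler_pdivlMr //; apply: le_trans HM _.
  by rewrite le_eqVlt; apply/predU1l; field; rewrite gt_eqF.
have := ler_wpM2l (ltW t0) Dt_le; lra.
Qed.

Lemma support_energy_le_energy f :
  support_energy B wt (cutoff rho p r%:R) f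
  <= energy B wt (cutoff rho p (3 * r%:R) \* f).
Proof.
apply: ler_sum => x _; apply: ler_sum => y _.
have [_|phx] := eqVneq (cutoff rho p r%:R x) 0.
  exact: mulr_ge0 (wt_ge0 x y) (sqr_ge0 _).
rewrite /= /wt; case: ifP => [yx|_]; last by rewrite !mul0r.
have x2 := cutoff_neq0 r_pos phx; have r3 : 0 < 3 * r%:R :> R by have := r_pos; lra.
rewrite !cutoff_eq1 ?mul1r //; last by have := r_pos; lra.
have := s_le_r; have := jump_le yx; have := rho_tri y x p; rewrite (rho_sym y x); lra.
Qed.

Lemma sum_support_energy_le :
  r%:R ^+ 2 * \sum_(n < r ^ 2 + r ^ 2) support_energy B wt (cutoff rho p r%:R) (gs n)
  <= 11 / 18 * cyl_mass g (7 * r).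
Proof.
have T0 : (0 < r ^ 2 + r ^ 2)%N by rewrite addn_gt0 expn_gt0 r_gt0.
have r3 : 0 < 3 * r%:R :> R by have := r_pos; lra.
have r26 : 2 * (3 * r%:R) <= 6 * r%:R :> R by lra.
have := sum_energy_le (Vs := B) wt_sym wt_ge0 m_ge0 (cutoff_ge0 rho p (3 * r%:R))
  (cutoff_le1 rho p (3 * r%:R)) r3 (fun x => cutoff_intrinsic x r3 (ball_uniq _))
  (fun n x phx => @heat_in_ball n x (lt_le_trans (cutoff_neq0 r3 phx) r26)) T0.
have sum_mass_le : \sum_(n < r ^ 2 + r ^ 2 + (r ^ 2 + r ^ 2)) mass B m (gs n)
    <= cyl_mass g (7 * r).
  apply: (ler_sum_ord_prefix (F := fun n => mass B m (gs n))).
    by move=> n; apply: (mass_ge0 _ m_ge0).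
  by rewrite expnMn; nia.
have support_le : \sum_(n < r ^ 2 + r ^ 2) support_energy B wt (cutoff rho p r%:R) (gs n)
    <= \sum_(n < r ^ 2 + r ^ 2) energy B wt (cutoff rho p (3 * r%:R) \* gs n).
  by apply: ler_sum => n _; apply: support_energy_le_energy.
have t0 : 0 < r%:R ^+ 2 :> R by rewrite exprn_gt0.
have Y0 : 0 <= \sum_(n < r ^ 2 + r ^ 2 + (r ^ 2 + r ^ 2)) mass B m (gs n).
  by apply: sumr_ge0 => n _; apply: (mass_ge0 _ m_ge0).
move: support_le sum_mass_le Y0; set X := \sum_(n < _) support_energy _ _ _ _.
set K := \sum_(n < _) energy _ _ _; set Y := \sum_(n < _) mass _ _ _.
rewrite natrD natrX => XK YC Y0 KY.
have {}KY : K * r%:R ^+ 2 <= 11 / 18 * Y.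
  rewrite -ler_pdivlMr //; apply: le_trans KY _.
  by rewrite le_eqVlt; apply/predU1l; field; rewrite gt_eqF ?gt_eqF ?addr_gt0.
move: KY YC; have := ler_wpM2l (ltW t0) XK; lra.
Qed.

Lemma cyl_mass_Dt : r%:R ^+ 4 * cyl_mass (Dt g) r <= cyl_mass g (7 * r).
Proof.
have := cyl_mass_Dt_le_support; have := sum_support_energy_le.
have := cyl_mass_ge0 g (7 * r); have t0 : 0 <= r%:R ^+ 2 :> R by rewrite exprn_ge0.
set X := \sum_(n < _) _; set L := cyl_mass _ r => C0 XC LX.
have := ler_wpM2l t0 LX; rewrite (_ : r%:R ^+ 4 = r%:R ^+ 2 * r%:R ^+ 2) -?exprD //.
lra.
Qed.

End ReversePoincare.

Lemma cyl_mass_Dtq u j r : ancient_solution nb w m u -> (0 < r)%N -> s <= r%:R ->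
  (r%:R ^+ 4) ^+ j * cyl_mass (Dtq j u) r <= cyl_mass u (7 ^ j * r).
Proof.
move=> u_anc; elim: j r => [|j IH] r r0 sr; first by rewrite expr0 mul1r mul1n.
have r7 : (r <= 7 * r)%N by rewrite leq_pmull.
have := IH (7 * r)%N (leq_trans r0 r7) (le_trans sr _); rewrite ler_nat => /(_ r7).
rewrite expnSr -mulnA; apply: le_trans.
have step : r%:R ^+ 4 * cyl_mass (Dtq j.+1 u) r <= cyl_mass (Dtq j u) (7 * r).
  exact: cyl_mass_Dt (ancient_Dtq j u_anc) r0 sr.
rewrite exprSr -mulrA; apply: le_trans (ler_wpM2l _ step) _; first by rewrite !exprn_ge0.
rewrite ler_wpM2r ?cyl_mass_ge0 // lerXn2r ?nnegrE ?exprn_ge0 //.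
by rewrite lerXn2r ?nnegrE // ler_nat.
Qed.

Lemma cyl_mass_le_bound f r (b : R) :
  (forall y (n : nat), rho y p <= r%:R -> (n < r ^ 2)%N -> `|f y (- n%:Z)| <= b) ->
  cyl_mass f r <= (r ^ 2)%:R * b ^+ 2 * \sum_(y <- ball r%:R) m y.
Proof.
move=> fb; have -> : (r ^ 2)%:R * b ^+ 2 * \sum_(y <- ball r%:R) m y
    = \sum_(n < r ^ 2) b ^+ 2 * \sum_(y <- ball r%:R) m y.
  by rewrite sumr_const card_ord -mulrA mulr_natl.
apply: ler_sum => n _; rewrite /mass mulr_sumr !big_seq.
apply: ler_sum => y; rewrite mem_ball => yr; rewrite mulrC ler_wpM2r ?m_ge0 //.
rewrite -real_normK ?num_real // lerXn2r ?nnegrE ?fb //.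
exact: le_trans (normr_ge0 _) (fb y n yr (ltn_ord n)).
Qed.

Section Growth.
Variables (x0 : V) (alpha C k Cu : R) (u : V -> int -> R).
Hypothesis volume_growth : poly_volume_growth m rho x0 alpha C.
Hypothesis u_growth : forall r : R, 0 < r -> forall y (t : int), rho y p <= r ->
  - (r ^+ 2) <= t%:~R -> t <= 0 -> `|u y t| <= Cu * powR (1 + r) k.

Lemma cyl_mass_growth (K : nat) : (0 < K)%N ->
  exists L : R, forall r : nat, (0 < r)%N ->
    cyl_mass u (K * r) <= L * powR r%:R (2 * k + alpha + 2).
Proof.
move=> K0; have K1 : 1 <= K%:R :> R by rewrite ler1n.
have d0 := rho_ge0 p x0.
exists (K%:R ^+ 2 * (Cu ^+ 2 * (powR (K%:R + 1 + 0) k + 1) ^+ 2)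
        * (`|C| * (powR (K%:R + 1 + rho p x0) alpha + 1))) => r r0.
have r1 : 1 <= r%:R :> R by rewrite ler1n.
have Kr : (K * r)%:R = K%:R * r%:R + 0 :> R by rewrite natrM addr0.
have Kr0 : 0 < (K * r)%:R :> R by rewrite ltr0n muln_gt0 K0.
have u_le y (n : nat) : rho y p <= (K * r)%:R -> (n < (K * r) ^ 2)%N ->
    `|u y (- n%:Z)| <= Cu * powR (1 + (K * r)%:R) k.
  move=> yr nKr; apply: u_growth; rewrite ?oppr_le0 //.
  by rewrite intrN lerN2 -natrX ler_nat ltnW.
apply: le_trans (cyl_mass_le_bound u_le) _.
have vol : \sum_(y <- ball (K * r)%:R) m y
    <= `|C| * (powR (K%:R + 1 + rho p x0) alpha + 1) * powR r%:R alpha.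
  apply: le_trans (volume_growth (r := (K * r)%:R + rho p x0) _ (ball_uniq _) _) _.
  - by apply: ltr_wpDr.
  - by move=> y; rewrite mem_ball => yr; apply: le_trans (rho_tri y p x0) _; lra.
  rewrite -mulrA; apply: le_trans (ler_norm _ ) _; rewrite normrM ler_wpM2l //.
  rewrite ger0_norm ?powR_ge0 // natrM; exact: powR_affine_le.
have bound_sq : (Cu * powR (1 + (K * r)%:R) k) ^+ 2
    <= Cu ^+ 2 * (powR (K%:R + 1 + 0) k + 1) ^+ 2 * powR r%:R k ^+ 2.
  rewrite -mulrA [leLHS]exprMn ler_wpM2l ?sqr_ge0 // -exprMn lerXn2r ?nnegrE ?powR_ge0 //.
    by rewrite mulr_ge0 ?powR_ge0 // addr_ge0 ?powR_ge0.
  by rewrite Kr; apply: powR_affine_le.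
have pow_split : powR r%:R (2 * k + alpha + 2)
    = r%:R ^+ 2 * powR r%:R k ^+ 2 * powR r%:R alpha.
  have rn0 : r%:R != 0 :> R by rewrite gt_eqF //; lra.
  rewrite !powRD ?rn0 ?implybT // [2 * k]mulrC powRrM.
  by rewrite !powR_mulrn ?powR_ge0 // powRr1 ?ler0n //; ring.
have := ler_pM (sqr_ge0 _) (sumr_ge0 _ (fun y _ => m_ge0 y)) bound_sq vol.
move=> /(ler_wpM2l (ler0n R ((K * r) ^ 2))) le_Kr.
rewrite -mulrA; apply: le_trans le_Kr _.
by rewrite pow_split natrX natrM le_eqVlt; apply/predU1l; ring.
Qed.

Lemma Dtq_vanishes q x (t : int) : ancient_solution nb w m u ->
  2 * k + alpha + 2 < 4 * q%:R -> t <= 0 -> Dtq q u x t = 0.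
Proof.
move=> u_anc q_large t0; have [L cylL] := cyl_mass_growth (expn_gt0 7 q).
set n := `|t|%N; have tn : t = - n%:Z by rewrite /n lez0_abs // opprK.
set e := 2 * k + alpha + 2; have d0 : 0 < 4 * q%:R - e by rewrite subr_gt0.
suff : m x * Dtq q u x t ^+ 2 <= 0.
  by rewrite pmulr_rle0 // => D2; apply/eqP; rewrite -sqrf_eq0 eq_le D2 sqr_ge0.
set N := (Num.bound `|s| + n.+1 + Num.bound (rho x p))%N.
apply: (powR_bounded_le0 (L := L) (N := N) d0) => r Nr.
have r0 : (0 < r)%N by move: Nr; lia.
have sr : s <= r%:R.
  have := archi_boundP (normr_ge0 s); have := ler_norm s.
  have : (Num.bound `|s|)%:R <= r%:R :> R by rewrite ler_nat; move: Nr; lia.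
  lra.
have xr : rho x p <= r%:R.
  have := archi_boundP (rho_ge0 x p).
  have : (Num.bound (rho x p))%:R <= r%:R :> R by rewrite ler_nat; move: Nr; lia.
  lra.
have nr : (n < r ^ 2)%N by move: Nr; nia.
have pow_split : (r%:R ^+ 4) ^+ q = powR r%:R e * powR r%:R (4 * q%:R - e) :> R.
  have rn0 : r%:R != 0 :> R by rewrite pnatr_eq0 -lt0n.
  by rewrite -powRD ?rn0 ?implybT // addrC subrK -natrM powR_mulrn ?ler0n // exprM.
have := cyl_mass_ge_term (Dtq q u) xr nr; rewrite -tn => term.
have := le_trans (ler_wpM2l (exprn_ge0 q (exprn_ge0 4 (ler0n R r))) term)
  (le_trans (cyl_mass_Dtq q u_anc r0 sr) (cylL r r0)).
by rewrite pow_split mulrAC -mulrA [L * _]mulrC ler_pM2l ?powR_gt0 ?ltr0n.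
Qed.

End Growth.

End Graph.

Theorem corollary4p3 (R : realType) (V : eqType) (nb : V -> seq V)
    (w : V -> V -> R) (m : V -> R) (rho : V -> V -> R)
    (x0 : V) (alpha C k : R) (u : V -> int -> R) (q : nat) :
  weighted_graph nb w m ->
  intrinsic nb w m rho ->
  finite_balls rho ->
  finite_jump nb rho ->
  poly_volume_growth m rho x0 alpha C ->
  0 < k ->
  Ptilde nb w m rho k u ->
  2 * k + alpha + 2 < 4 * q%:R ->
  (forall x (t : int), t <= 0 -> Dtq q u x t = 0) /\
  (exists p : nat -> V -> R, forall x (t : int), t <= 0 ->
      u x t = \sum_(i < q) p i x * ('C(`|t|%N, i))%:R).
Proof.
move=> [nb_uniq _ nb_sym w_sym_gt0 [m_gt0 _]] [[_ rho_ge0 rho_sym rho_tri] rho_intr]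
  balls [s jump] vol _ [u_anc [p [Cu u_growth]]] q_large.
pose ball r := undup (sval (cid (balls p r))).
have mem_ball r y : (y \in ball r) = (rho y p <= r).
  by rewrite mem_undup; case: cid => l /= ball_l; apply/idP/idP => /ball_l.
have uq0 : forall x (t : int), t <= 0 -> Dtq q u x t = 0.
  move=> x t; apply: (Dtq_vanishes nb_uniq nb_sym w_sym_gt0 m_gt0 rho_sym rho_tri
    rho_ge0 rho_intr jump (fun r => undup_uniq _) mem_ball vol u_growth) => //.
by split; last exact: Dtq_eq0_expansion.
Qed.
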